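(* Let $\mathbb{K}$ be an algebraically closed field of characteristic zero and let $D=\partial_x+(ay+b)\partial_y$ be a derivation of $\mathbb{K}[x,y]$ with $a,b\in\mathbb{K}[x]$, $a\neq 0$, and $\deg a\geq 1$ or $\deg b\geq 1$. Then $\mathrm{Aut}(D)\neq\{\mathrm{id}\}$ if and only if there exists $h\in\mathbb{K}[x]$ with $D(h)=ah+b$ (that is, $h'=ah+b$). In particular, if $\mathrm{Aut}(D)\neq\{\mathrm{id}\}$ and $b\neq 0$, then $\deg b\geq\deg a$.
   Context: $\mathrm{Aut}(D)$ denotes the group of $\mathbb{K}$-algebra automorphisms $\rho$ of $\mathbb{K}[x,y]$ with $\rho D=D\rho$. *)

From HB Require Import structures.
From mathcomp Require Import all_boot all_order all_algebra all_field.
Set Implicit Arguments. Unset Strict Implicit. Unset Printing Implicit Defensive.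
Import GRing.Theory.
Local Open Scope ring_scope.

(* K[x,y] is represented as {poly {poly K}}: the inner variable is x,
   the outer variable is y.  A polynomial p = \sum_i p_i(x) y^i. *)

Definition dx (K : fieldType) (p : {poly {poly K}}) : {poly {poly K}} :=
  map_poly (fun q : {poly K} => q^`()) p.

Definition dy (K : fieldType) (p : {poly {poly K}}) : {poly {poly K}} := p^`().

Definition Dab (K : fieldType) (a b : {poly K}) (p : {poly {poly K}})
  : {poly {poly K}} :=
  dx p + (a%:P * 'X + b%:P) * dy p.

Definition is_Kalg_aut (K : fieldType)
  (rho : {poly {poly K}} -> {poly {poly K}}) : Prop :=
  [/\ forall p q, rho (p + q) = rho p + rho q,
      forall p q, rho (p * q) = rho p * rho q,
      forall c : K, rho (c%:P%:P) = c%:P%:P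
    & bijective rho].

Definition in_AutD (K : fieldType) (D : {poly {poly K}} -> {poly {poly K}})
  (rho : {poly {poly K}} -> {poly {poly K}}) : Prop :=
  is_Kalg_aut rho /\ (forall p, rho (D p) = D (rho p)).

Definition AutD_nontrivial (K : fieldType)
  (D : {poly {poly K}} -> {poly {poly K}}) : Prop :=
  exists rho, in_AutD D rho /\ exists p, rho p <> p.

From HB Require Import structures.
From mathcomp Require Import all_boot all_order all_algebra all_field.
From mathcomp Require Import ring.
Import GRing.Theory.
Local Open Scope ring_scope.
Set Implicit Arguments. Unset Strict Implicit.

(* If [h' = a h + b], the reflection [y |-> 2 h - y] is an involution fixing
   [x] and sending [D y = a y + b] to [a (2 h - y) + b], so composition with it
   commutes with [D]; in characteristic 0 it is not the identity.
   Conversely let [rho] be a nontrivial automorphism commuting with [D]. As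
   [a <> 0], the kernel of [D] consists of constants, and [D (rho x - x) = 0]
   gives [rho x = x + e]. Comparing the top [y]-coefficients in
   [D g = a(x + e) g + b(x + e)], where [g = rho y] has [y]-degree [n >= 1],
   gives [a(x + e) = n a], whence [n = 1] and, when [deg a >= 1], [e = 0]. Then
   [g = al y + g0] with [al] constant and [g0' = a g0 + (1 - al) b]; [al = 1]
   would force [g0 = 0] and [rho = id], otherwise [h = g0 / (1 - al)] works.
   For constant [a] the equation [h' = a h + b] is solved by induction on the
   degree of [b], and the degree bound is read off [b = h' - a h]. *)


Section PolyDeriv.
Variable R : idomainType.
Implicit Types p q r : {poly R}.

Lemma size_mul_ge p q : p != 0 -> q != 0 -> (size q <= size (p * q)%R)%N.
Proof.
move=> p_neq0 q_neq0; rewrite size_mul //.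
by move: p_neq0; rewrite -size_poly_gt0; case: (size p) => // n _; rewrite addSn leq_addl.
Qed.

Lemma deriv_eq_mul_eq0 q r : r != 0 -> q^`() = r * q -> q = 0.
Proof.
move=> r_neq0 qr; apply/eqP/contraT => q_neq0.
by have := lt_size_deriv q_neq0; rewrite qr ltnNge size_mul_ge.
Qed.

Lemma size_le_of_deriv_eq (a b h : {poly R}) :
  (1 < size a)%N -> h^`() = a * h + b -> b != 0 -> (size a <= size b)%N.
Proof.
move=> a_gt1 hE b_neq0.
have a_neq0 : a != 0 by rewrite -size_poly_gt0 ltnW.
have h_neq0 : h != 0.
  by apply: contraNneq b_neq0 => h0; move: hE; rewrite h0 deriv0 mulr0 add0r => <-.
have bE : b = h^`() - a * h by rewrite hE addrC addKr.
have lt_h' : (size h^`() < size (a * h)%R)%N.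
  exact: leq_trans (lt_size_deriv h_neq0) (size_mul_ge a_neq0 h_neq0).
by rewrite bE addrC size_polyDl size_polyN // mulrC size_mul_ge.
Qed.

End PolyDeriv.

Section Pchar0.
Variable R : idomainType.
Hypothesis R0 : [pchar R] =i pred0.

Lemma pchar0_poly : [pchar {poly R}] =i pred0.
Proof. by move=> l; rewrite pchar_poly R0. Qed.

Lemma mulrn_eq0_pchar0 (x : R) n : (x *+ n == 0) = (n == 0)%N || (x == 0).
Proof. by rewrite -mulr_natr mulf_eq0 ((pcharf0P _).1 R0) orbC. Qed.

Lemma mulrn_inj_pchar0 (x : R) : x != 0 -> injective (GRing.natmul x).
Proof.
move=> x_neq0; suff le_inj i j : (i <= j)%N -> x *+ i = x *+ j -> i = j.
  by move=> i j xij; case: (leqP i j) => [/le_inj|/ltnW/le_inj/(_ (esym xij))]; auto.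
move=> le_ij xij; apply/eqP; rewrite eqn_leq le_ij /= -subn_eq0.
by rewrite -(orbF (_ == 0)%N) -(negPf x_neq0) -mulrn_eq0_pchar0 mulrnBr // xij subrr.
Qed.

Lemma deriv_eq0_polyC (q : {poly R}) : q^`() = 0 -> q = (q`_0)%:P.
Proof.
move=> q'0; apply/polyP => -[|i]; rewrite coefC //=.
by move/polyP/(_ i)/eqP: q'0; rewrite coef_deriv coef0 mulrn_eq0_pchar0 => /eqP.
Qed.

Lemma comp_XaddC_eq_mulrn (a : {poly R}) e n :
  (1 < size a)%N -> a \Po ('X + e%:P) = a *+ n -> n = 1%N /\ e = 0.
Proof.
move=> a_gt1 aE.
have la_neq0 : lead_coef a != 0 by rewrite lead_coef_eq0 -size_poly_gt0 ltnW.
have n1 : n = 1%N.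
  have /= := congr1 (fun p : {poly R} => p`_(size a).-1) aE.
  rewrite coefMn -lead_coefE -(size_comp_poly2 a (size_XaddC e)) -lead_coefE.
  rewrite lead_coef_comp ?size_XaddC // lead_coefXaddC expr1n mulr1.
  case: n {aE} => [/eqP|m]; first by rewrite (negPf la_neq0).
  rewrite mulrS -{1}[lead_coef a]addr0 => /addrI/esym/eqP.
  by rewrite mulrn_eq0_pchar0 (negPf la_neq0) orbF => /eqP ->.
split=> //; rewrite n1 mulr1n in aE; apply/eqP/contraT => e_neq0.
have aeE k : a.[e *+ k] = a.[0].
  elim: k => [|k IHk]; first by rewrite mulr0n.
  by rewrite mulrSr -IHk -{2}aE horner_comp hornerD hornerX hornerC.
pose q := a - (a.[0])%:P.
have q_neq0 : q != 0.
  by rewrite subr_eq0; apply: contraTneq a_gt1 => ->; rewrite -leqNgt size_polyC_leq1.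
have := max_poly_roots q_neq0 (rs := mkseq (GRing.natmul e) (size a)).
rewrite size_mkseq mkseq_uniq; last exact: mulrn_inj_pchar0.
have -> : all (root q) (mkseq (GRing.natmul e) (size a)).
  by apply/allP => _ /mapP[k _ ->]; rewrite rootE !hornerE aeE subrr.
move=> /(_ isT isT); rewrite ltnNge (leq_trans (size_polyD _ _)) //.
by rewrite geq_max leqnn size_polyN (leq_trans (size_polyC_leq1 _)) // ltnW.
Qed.

End Pchar0.

Lemma deriv_eq_mulC_add_solvable (K : fieldType) (c : K) (b : {poly K}) :
  c != 0 -> exists h : {poly K}, h^`() = c%:P * h + b.
Proof.
move=> c_neq0; have [n] := ubnP (size b); elim: n b => // n IHn b b_lt.
have [->|b_neq0] := eqVneq b 0; first by exists 0; rewrite deriv0 mulr0 addr0.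
have [|h hE] := IHn (c^-1%:P * b^`()).
  by rewrite size_Cmul ?invr_eq0 // (leq_trans (lt_size_deriv b_neq0)).
exists (h - c^-1%:P * b).
have cK : c%:P * c^-1%:P = 1 by rewrite -polyCM divff.
by rewrite derivB deriv_mulC hE mulrBr mulrA cK mul1r addrK subrK.
Qed.

Section PartialX.
Variable K : fieldType.
Implicit Types p q : {poly {poly K}}.

Lemma dxB p q : dx (p - q) = dx p - dx q. Proof. exact: raddfB. Qed.
Lemma dx0 : dx 0 = 0 :> {poly {poly K}}. Proof. exact: raddf0. Qed.
Lemma dxD p q : dx (p + q) = dx p + dx q. Proof. exact: raddfD. Qed.

Lemma dxC (c : {poly K}) : dx c%:P = (c^`())%:P. Proof. exact: map_polyC. Qed.

Lemma dxX : dx 'X = 0 :> {poly {poly K}}.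
Proof.
by apply/polyP => i; rewrite coef_map !coefX coef0; case: (i == 1)%N; [exact: derivC | exact: raddf0].
Qed.

Lemma dxM p q : dx (p * q) = dx p * q + p * dx q.
Proof.
apply/polyP => i; rewrite coefD !coef_map /= !coefM raddf_sum -big_split /=.
by apply: eq_bigr => j _; rewrite derivM !coef_map.
Qed.

Lemma dx_comp p G : dx (p \Po G) = dx p \Po G + (p^`() \Po G) * dx G.
Proof.
elim/poly_ind: p => [|p c IHp].
  by rewrite comp_poly0 dx0 deriv0 !comp_poly0 mul0r addr0.
rewrite comp_polyD comp_polyM comp_polyX comp_polyC !dxD !dxM IHp dxX dxC.
rewrite derivMXaddC !comp_polyD !comp_polyM comp_polyX !comp_polyC polyC0; ring.
Qed.

End PartialX.

Section Derivation.
Variables (K : fieldType) (a b : {poly K}).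
Implicit Types (p g : {poly {poly K}}) (q : {poly K}).
Local Notation D := (Dab a b).

Lemma DabB p g : D (p - g) = D p - D g.
Proof. by rewrite /Dab dxB /dy derivB; ring. Qed.

Lemma Dab_polyC q : D q%:P = (q^`())%:P.
Proof. by rewrite /Dab /dy derivC mulr0 addr0 dxC. Qed.

Lemma Dab_X : D 'X = a%:P * 'X + b%:P.
Proof. by rewrite /Dab dxX /dy derivX mulr1 add0r. Qed.

Lemma coef_Dab p i :
  (D p)`_i = (p`_i)^`() + (a * p`_i) *+ i + (b * p`_i.+1) *+ i.+1.
Proof.
rewrite /Dab /dy coefD coef_map mulrDl coefD -mulrA coefCM (mulrC 'X) coefMX.
by rewrite coefCM !coef_deriv addrA; case: i => [|i] /=; rewrite ?mulr0 ?mulr0n -?mulrnAr.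
Qed.

Lemma Dab_comp p G : D G = a%:P * G + b%:P -> D (p \Po G) = D p \Po G.
Proof.
have XG : (a%:P * 'X + b%:P) \Po G = a%:P * G + b%:P.
  by rewrite comp_polyD comp_polyM comp_polyX !comp_polyC.
move=> DG; rewrite {2}/Dab /dy comp_polyD comp_polyM XG -DG /Dab dx_comp /dy deriv_comp; ring.
Qed.

Lemma Dab_affine_scale g c d :
  (1 < size g)%N -> D g = c%:P * g + d%:P -> c = a *+ (size g).-1.
Proof.
move=> g_gt1 DgE; set n := (size g).-1.
have gn_neq0 : g`_n != 0.
  by rewrite -lead_coefE lead_coef_eq0 -size_poly_gt0 ltnW.
have n_gt0 : (0 < n)%N by rewrite -ltnS prednK // ltnW.
move/polyP/(_ n): DgE; rewrite coef_Dab coefD coefCM coefC gtn_eqF //= addr0.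
rewrite [g`_n.+1]nth_default ?prednK ?(ltnW g_gt1) // mulr0 mul0rn addr0.
move=> gnE; apply/eqP; rewrite -subr_eq0; apply: contraNT gn_neq0 => ca_neq0.
by apply/eqP/(deriv_eq_mul_eq0 ca_neq0); rewrite mulrBl -gnE mulrnAl addrK.
Qed.

Hypothesis K0 : [pchar K] =i pred0.

Lemma Dab_eq0 p : a != 0 -> D p = 0 -> p = (p`_0`_0)%:P%:P.
Proof.
move=> a_neq0 Dp0; have [p_le1|p_gt1] := leqP (size p) 1.
  rewrite (size1_polyC p_le1) Dab_polyC in Dp0 *.
  by move/polyC_inj/(deriv_eq0_polyC K0) in Dp0; rewrite coefC /= {1}Dp0.
have := @Dab_affine_scale p 0 0 p_gt1; rewrite polyC0 mul0r addr0 => /(_ Dp0)/esym/eqP.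
rewrite (mulrn_eq0_pchar0 (pchar0_poly K0)) (negPf a_neq0) orbF.
by rewrite -subn1 subn_eq0 leqNgt p_gt1.
Qed.

Lemma Dab_affine_linear g : size g = 2 -> D g = a%:P * g + b%:P ->
  exists2 al : K, g`_1 = al%:P & (g`_0)^`() = a * g`_0 + b * (1 - al)%:P.
Proof.
move=> g2 DgE; have g1E : g`_1 = (g`_1`_0)%:P.
  apply: (deriv_eq0_polyC K0); move/polyP/(_ 1%N): DgE.
  rewrite coef_Dab coefD coefCM coefC /= addr0 [g`_2]nth_default ?g2 //.
  by rewrite mulr0 mul0rn addr0 mulr1n => /(canRL (addrK _)); rewrite subrr.
set al := g`_1`_0 in g1E; exists al => //; move/polyP/(_ 0%N): DgE.
rewrite coef_Dab coefD coefCM coefC /= mulr0n addr0 mulr1n g1E => /(canRL (addrK _)) ->.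
by rewrite polyCB polyC1 mulrBr mulr1 addrA.
Qed.


End Derivation.

Section KalgAut.
Variables (K : fieldType) (rho : {poly {poly K}} -> {poly {poly K}}).
Hypothesis rho_aut : is_Kalg_aut rho.

Lemma Kalg_autD p q : rho (p + q) = rho p + rho q.
Proof. by case: rho_aut. Qed.

Lemma Kalg_autM p q : rho (p * q) = rho p * rho q.
Proof. by case: rho_aut. Qed.

Lemma Kalg_autC c : rho c%:P%:P = c%:P%:P.
Proof. by case: rho_aut. Qed.

Lemma Kalg_aut_inj : injective rho.
Proof. by case: rho_aut => _ _ _ /bij_inj. Qed.

Lemma Kalg_aut0 : rho 0 = 0.
Proof. by have := Kalg_autC 0; rewrite !polyC0. Qed.

Lemma Kalg_aut1 : rho 1 = 1.
Proof. by have := Kalg_autC 1; rewrite !polyC1. Qed.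

Lemma Kalg_autB p q : rho (p - q) = rho p - rho q.
Proof. by apply: (addIr (rho q)); rewrite -Kalg_autD !subrK. Qed.

Lemma Kalg_aut_polyC u : rho 'X%:P = u%:P -> forall q, rho q%:P = (q \Po u)%:P.
Proof.
move=> rhoX; elim/poly_ind => [|q c IHq]; first by rewrite comp_poly0 Kalg_aut0.
rewrite polyCD polyCM Kalg_autD Kalg_autM IHq rhoX Kalg_autC.
by rewrite comp_polyD comp_polyM comp_polyX comp_polyC polyCD polyCM.
Qed.

Lemma Kalg_aut_id : rho 'X%:P = 'X%:P -> rho 'X = 'X -> rho =1 id.
Proof.
move=> rhoX rhoY; elim/poly_ind => [|p q IHp]; first exact: Kalg_aut0.
by rewrite Kalg_autD Kalg_autM IHp rhoY (Kalg_aut_polyC rhoX) comp_polyXr.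
Qed.

End KalgAut.

Lemma comp_poly_Kalg_aut (K : fieldType) (G Gi : {poly {poly K}}) :
  G \Po Gi = 'X -> Gi \Po G = 'X -> is_Kalg_aut (comp_poly G).
Proof.
move=> GGi GiG; split=> [p q|p q|c|]; rewrite ?comp_polyD ?comp_polyM ?comp_polyC //.
by exists (comp_poly Gi) => p; rewrite /= -comp_polyA ?GiG ?GGi comp_polyXr.
Qed.

Section AutD.
Variables (K : fieldType) (a b : {poly K}).
Hypothesis K0 : [pchar K] =i pred0.
Local Notation D := (Dab a b).

Lemma reflection_in_AutD h :
  h^`() = a * h + b -> in_AutD D (comp_poly ((h *+ 2)%:P - 'X)).
Proof.
move=> hE; set G := (h *+ 2)%:P - 'X.
have GG : G \Po G = 'X by rewrite comp_polyB comp_polyC comp_polyX opprB addrC subrK.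
split=> [|p]; first exact: (comp_poly_Kalg_aut GG GG).
apply/esym/Dab_comp; rewrite DabB Dab_polyC Dab_X derivMn hE /G.
by rewrite polyCMn polyCD polyCM; ring.
Qed.

Lemma AutD_nontrivial_of_solution h : h^`() = a * h + b -> AutD_nontrivial D.
Proof.
move=> hE; exists (comp_poly ((h *+ 2)%:P - 'X)); split; first exact: reflection_in_AutD.
exists 'X; rewrite comp_polyX => /polyP/(_ 1%N)/eqP.
rewrite coefB coefC coefX /= sub0r eq_sym -addr_eq0 -mulr2n.
by rewrite ((pcharf0P _).1 (pchar0_poly K0)).
Qed.

Lemma in_AutD_shift rho : a != 0 -> in_AutD D rho ->
  exists e, forall q, rho q%:P = (q \Po ('X + e%:P))%:P.
Proof.
move=> a_neq0 [rho_aut rhoD].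
have Dx : D 'X%:P = 1 by rewrite Dab_polyC derivX.
have /(Dab_eq0 K0 a_neq0) rhoxE : D (rho 'X%:P - 'X%:P) = 0.
  by rewrite DabB -rhoD Dx (Kalg_aut1 rho_aut) subrr.
exists (rho 'X%:P - 'X%:P)`_0`_0; apply: Kalg_aut_polyC => //.
by rewrite polyCD -rhoxE addrC subrK.
Qed.

Lemma solution_of_AutD_nontrivial :
  (1 < size a)%N -> AutD_nontrivial D -> exists h, h^`() = a * h + b.
Proof.
move=> a_gt1 [rho [[rho_aut rhoD] [p rho_p]]].
have a_neq0 : a != 0 by rewrite -size_poly_gt0 ltnW.
have [e rhoC] := in_AutD_shift a_neq0 (conj rho_aut rhoD).
set g := rho 'X.
have Dg : D g = (a \Po ('X + e%:P))%:P * g + (b \Po ('X + e%:P))%:P.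
  by rewrite /g -rhoD Dab_X (Kalg_autD rho_aut) (Kalg_autM rho_aut) !rhoC.
have g_gt1 : (1 < size g)%N.
  rewrite ltnNge; apply/negP => /size1_polyC gE.
  suff /polyP/(_ 1%N)/eqP : 'X = (g`_0 \Po ('X - e%:P))%:P by rewrite coefX coefC oner_eq0.
  apply: (Kalg_aut_inj rho_aut); rewrite rhoC -comp_polyA comp_polyB comp_polyX.
  by rewrite comp_polyC addrK comp_polyXr -gE.
have [n1 e0] := comp_XaddC_eq_mulrn K0 a_gt1 (Dab_affine_scale g_gt1 Dg).
rewrite e0 addr0 !comp_polyXr in rhoC Dg.
have g2 : size g = 2 by rewrite -(prednK (ltnW g_gt1)) n1.
have [al g1E g0E] := Dab_affine_linear K0 g2 Dg.
have [al1|al_neq1] := eqVneq al 1.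
  have /(deriv_eq_mul_eq0 a_neq0) g00 : (g`_0)^`() = a * g`_0.
    by rewrite g0E al1 subrr mulr0 addr0.
  suff gX : g = 'X by case: rho_p; apply: Kalg_aut_id => //; rewrite rhoC comp_polyXr.
  apply/polyP => -[|[|i]]; rewrite coefX //= ?g1E ?al1 //.
  by rewrite nth_default // g2.
exists ((1 - al)^-1%:P * g`_0); rewrite derivM derivC mul0r add0r g0E.
have alK : (1 - al)^-1%:P * (1 - al)%:P = 1.
  by rewrite -polyCM mulVf // subr_eq0 eq_sym.
by rewrite mulrDr mulrCA [X in _ + X]mulrCA alK mulr1.
Qed.

End AutD.

Unset Implicit Arguments. Set Strict Implicit.

Theorem corollary3p5 (K : closedFieldType) (a b : {poly K}) :
  [pchar K] =i pred0 ->
  a != 0 ->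
  (1 < size a)%N \/ (1 < size b)%N ->
  (AutD_nontrivial (Dab a b) <-> exists h : {poly K}, h^`() = a * h + b) /\
  (AutD_nontrivial (Dab a b) -> b != 0 -> (size a <= size b)%N).
Proof.
move=> K0 a_neq0 _.
have solvable : AutD_nontrivial (Dab a b) <-> exists h : {poly K}, h^`() = a * h + b.
  split=> [autD|[h /(AutD_nontrivial_of_solution K0)//]].
  have [a_gt1|a_le1] := ltnP 1 (size a); first exact: solution_of_AutD_nontrivial.
  rewrite (size1_polyC a_le1) in a_neq0 *.
  by apply: deriv_eq_mulC_add_solvable; rewrite polyC_eq0 in a_neq0.
split=> // /solvable[h hE] b_neq0.
have [a_le1|a_gt1] := leqP (size a) 1; last exact: size_le_of_deriv_eq hE b_neq0.
by rewrite (leq_trans a_le1) // size_poly_gt0.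
Qed.
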